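(* Let $A$ be a finite fast set of standard functions which is totally ordered by $<$, with elements $a_0<\dots<a_{n-1}$ and greatest element $a_{\max}$. Suppose that $A^\circ\in\mathcal{S}$ and that for every $i<n-1$, if $a_i\sqsubset a_{\max}$ then $a_{\max}^\circ<a_i$. Then $A\in\mathcal{S}$.
   Context: $\mathrm{Homeo}_+(I)$ acts on $I=[0,1]$ on the right, composition left to right. Support $\mathrm{supt}(f)=\{t:tf\ne t\}$; extended support = interior of its closure; orbitals = components of the support, endpoints = transition points; a bump has exactly one orbital, positive if $tf>t$ there, else negative; the bump of $g$ on an orbital $J$ agrees with $g$ on $J$, identity elsewhere. A marking assigns to each bump $a$ with support $(u,v)$ a point $s_a\in(u,v)$; feet of $a$: $(u,s_a)$ and $[t_a,v)$ with $t_a=s_aa$ ($a$ positive) or $s_aa^{-1}$ ($a$ negative). A marked function has finitely many bumps, each marked. A finite set of marked functions is fast if no bump occurs in two of its elements and distinct bumps have disjoint feet. A standard function is a marked function whose extended support is an interval, with all positive bumps right of all negative bumps, and #positive $-$ #negative bumps $\in\{0,1\}$. For standard $f,g$: $f\ll g$ iff extended supports disjoint with $f$'s to the left; $f\sqsubset g$ iff closure of extended support of $f$ lies in extended support of $g$; $f<g$ iff $f\ll g$ or $f\sqsubset g$. $f^\circ$: if $f$ has $>2$ orbitals, $f$ restricted to the union of its non-extreme orbitals (identity elsewhere, markers inherited); if $f$ has 1 or 2 orbitals and the left foot of its positive bump is $(r,s)$, a positive bump with support $(r,s)$ (arbitrary marker). $(f,g)$ is a standard pair if $\{f,g\}$ is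 fast and either $f\ll g$ or ($f\sqsubset g$ and $(g^\circ,f)$ is a standard pair). $\mathcal{S}$ = finite sets of standard functions, pairwise $<$-comparable, each pair $f<g$ a standard pair. For $f<g$ the oscillation $o(f,g)$ is the number of orbitals of $g$ containing a transition point of $f$. The rotation of $A$ is $A^\circ:=(A\setminus\{a_{\max}\})\cup\{a_{\max}^\circ\}$ if there is $i<|A|-1$ with $o(a_i,a_{\max})>0$, and $A^\circ:=A\setminus\{a_{\max}\}$ otherwise. *)

From HB Require Import structures.
From mathcomp Require Import all_boot all_order all_algebra.
From mathcomp Require Import all_classical all_reals topology normedtype.
Import numFieldNormedType.Exports.
Set Implicit Arguments. Unset Strict Implicit. Unset Printing Implicit Defensive.
Import Order.TTheory GRing.Theory Num.Theory.
Local Open Scope ring_scope.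
Local Open Scope classical_set_scope.

Section Fast.
Context {R : realType}.

(* Homeo_+(I): increasing homeomorphisms of [0,1], extended by the identity
   outside [0,1].  The (right) action t f is written [f t]. *)
Definition homeoI (f : R -> R) : Prop :=
  [/\ continuous f, {homo f : x y / x < y}, f 0 = 0, f 1 = 1
    & forall t, (t < 0) || (1 < t) -> f t = t].

Definition supt (f : R -> R) : set R := [set t | f t != t].
Definition ext_supt (f : R -> R) : set R := interior (closure (supt f)).

Definition is_orbital (f : R -> R) (u v : R) : Prop :=
  [/\ u < v, f u = u, f v = v & forall t, u < t < v -> f t != t].

(* a marked bump of a marked function: its orbital (bu,bv) and marker bs *)
Record bumpdat := BD { bu : R; bv : R; bs : R }.

Record mfun := MFun { mf : R -> R; mbumps : seq bumpdat }.

Definition bump0 := BD 0 0 0.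
Definition mfun0 := MFun id [::].
Definition bmp (F : mfun) k := nth bump0 (mbumps F) k.

Definition marked (F : mfun) : Prop :=
  [/\ homeoI (mf F),
      (forall k, (k < size (mbumps F))%N ->
         is_orbital (mf F) (bu (bmp F k)) (bv (bmp F k))
         /\ bu (bmp F k) < bs (bmp F k) < bv (bmp F k)),
      (forall k l, (k < size (mbumps F))%N -> (l < size (mbumps F))%N ->
         k <> l -> bv (bmp F k) <= bu (bmp F l) \/ bv (bmp F l) <= bu (bmp F k))
    & (forall t, mf F t != t -> exists2 k, (k < size (mbumps F))%N &
         bu (bmp F k) < t < bv (bmp F k))].

Definition bumpfun (F : mfun) (b : bumpdat) : R -> R :=
  fun t => if bu b < t < bv b then mf F t else t.

Definition posb (F : mfun) (b : bumpdat) : bool := bs b < mf F (bs b).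

(* feet: (u, s_a) and [t_a, v), with t_a = s_a a (a positive) or
   s_a a^{-1} (a negative); for a negative, t >= t_a iff t a >= s_a. *)
Definition lfoot (F : mfun) (b : bumpdat) : set R :=
  [set t | bu b < t < bs b].
Definition rfoot (F : mfun) (b : bumpdat) : set R :=
  [set t | t < bv b /\ (if posb F b then mf F (bs b) <= t else bs b <= mf F t)].
Definition feet (F : mfun) (b : bumpdat) : set R := lfoot F b `|` rfoot F b.

Definition fast (L : seq mfun) : Prop :=
  forall i j k l, (i < size L)%N -> (j < size L)%N ->
    (k < size (mbumps (nth mfun0 L i)))%N ->
    (l < size (mbumps (nth mfun0 L j)))%N ->
    (i, k) <> (j, l) ->
    let F := nth mfun0 L i in let G := nth mfun0 L j in
    (i <> j -> bumpfun F (bmp F k) <> bumpfun G (bmp G l))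
    /\ feet F (bmp F k) `&` feet G (bmp G l) = set0.

Definition standard (F : mfun) : Prop :=
  [/\ marked F,
      (exists a b, a < b /\ ext_supt (mf F) = [set t | a < t < b]),
      (forall k l, (k < size (mbumps F))%N -> (l < size (mbumps F))%N ->
         ~~ posb F (bmp F k) -> posb F (bmp F l) ->
         bv (bmp F k) <= bu (bmp F l))
    & let p := count (posb F) (mbumps F) in
      let q := count (predC (posb F)) (mbumps F) in
      (p == q) || (p == q.+1)].

Definition ll (F G : mfun) : Prop :=
  forall x y, ext_supt (mf F) x -> ext_supt (mf G) y -> x < y.
Definition sq (F G : mfun) : Prop :=
  closure (ext_supt (mf F)) `<=` ext_supt (mf G).
Definition lt (F G : mfun) : Prop := ll F G \/ sq F G.

(* A choice of "a positive bump with support (r,s) (arbitrary marker)":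
   c r s = (bump function, marker). *)
Definition choice_ok (c : R -> R -> (R -> R) * R) : Prop :=
  forall r s, 0 <= r -> r < s -> s <= 1 ->
    let b := (c r s).1 in let m := (c r s).2 in
    [/\ homeoI b, supt b = [set t | r < t < s], r < m < s & m < b m].

Definition leftmost (F : mfun) (b : bumpdat) : bool :=
  all (fun b' => bu b <= bu b') (mbumps F).
Definition rightmost (F : mfun) (b : bumpdat) : bool :=
  all (fun b' => bv b' <= bv b) (mbumps F).

Definition circ (c : R -> R -> (R -> R) * R) (F : mfun) : mfun :=
  if (2 < size (mbumps F))%N then
    let inner := [seq b <- mbumps F | ~~ leftmost F b && ~~ rightmost F b] in
    MFun (fun t => if has (fun b => bu b < t < bv b) inner then mf F t else t)
         inner
  else
    let p := nth bump0 (mbumps F) (find (posb F) (mbumps F)) in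
    let r := bu p in let s := bs p in
    MFun (c r s).1 [:: BD r s (c r s).2].

Inductive std_pair (c : R -> R -> (R -> R) * R) : mfun -> mfun -> Prop :=
| SP_ll F G : fast [:: F; G] -> ll F G -> std_pair c F G
| SP_sq F G : fast [:: F; G] -> sq F G -> std_pair c (circ c G) F ->
              std_pair c F G.

Definition inS (c : R -> R -> (R -> R) * R) (A : seq mfun) : Prop :=
  [/\ forall i, (i < size A)%N -> standard (nth mfun0 A i),
      forall i j, (i < size A)%N -> (j < size A)%N -> i <> j ->
        lt (nth mfun0 A i) (nth mfun0 A j) \/ lt (nth mfun0 A j) (nth mfun0 A i)
    & forall i j, (i < size A)%N -> (j < size A)%N ->
        lt (nth mfun0 A i) (nth mfun0 A j) ->
        std_pair c (nth mfun0 A i) (nth mfun0 A j)].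

(* number of orbitals of G containing a transition point of F *)
Definition osc (F G : mfun) : nat :=
  count (fun b => has (fun b' => (bu b < bu b' < bv b) || (bu b < bv b' < bv b))
                      (mbumps F)) (mbumps G).

(* rotation of A = [:: a_0; ...; a_{n-1}] listed in <-increasing order *)
Definition rotation (c : R -> R -> (R -> R) * R) (A : seq mfun) : seq mfun :=
  let n := size A in
  let amax := nth mfun0 A n.-1 in
  if has (fun i => (0 < osc (nth mfun0 A i) amax)%N) (iota 0 n.-1)
  then rcons (take n.-1 A) (circ c amax)
  else take n.-1 A.

End Fast.

(* Pairs of A not involving a_max are pairs of the rotation A°, which lies in S.
   For a pair a_i < a_max, if a_i ≪ a_max it is standard because A is fast.  If
   a_i ⊏ a_max, some transition point of a_i lies in an orbital of
   a_max (otherwise a left foot of a_i would overlap a left foot of a_max), so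
   o(a_i, a_max) > 0, the rotation contains a_max°, and a_max° < a_i makes
   (a_max°, a_i) a standard pair of A°, which is what (a_i, a_max) requires.
   Since < is irreflexive and asymmetric on standard functions, a pair a_i < a_j
   always has i < j. *)
From mathcomp Require Import all_boot all_order all_algebra.
From mathcomp Require Import all_classical all_reals topology normedtype.
Import numFieldNormedType.Exports.
Set Implicit Arguments. Unset Strict Implicit. Unset Printing Implicit Defensive.
Import Order.TTheory GRing.Theory Num.Theory.
Local Open Scope ring_scope.
Local Open Scope classical_set_scope.

Section StandardOrder.
Context {R : realType}.
Implicit Types (F G H : @mfun R) (a b u v x : R).

Lemma nbhs_itvoo u v x : u < x < v -> nbhs x [set t | u < t < v].
Proof.
move=> uxv; have := @near_in_itvoo R u v x; rewrite in_itv /= => /(_ uxv).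
by apply: filterS => t; rewrite in_itv.
Qed.

Lemma closure_itvoo_left a b : a < b -> closure [set t | a < t < b] a.
Proof.
move=> ab B Ba.
have : \forall t \near a^'+, a < t < b /\ B t.
  near=> t; split; last by near: t; exact: cvg_within.
  by apply/andP; split; near: t; [exact: nbhs_right_gt | exact: nbhs_right_lt].
by case/filter_ex => t [abt Bt]; exists t.
Unshelve. all: by end_near.
Qed.

Lemma standard_ext_supt_neq0 F : standard F -> exists x, ext_supt (mf F) x.
Proof.
case=> _ [a [b [ab ->]]] _ _; exists ((a + b) / 2).
by rewrite /=; have [-> ->] := midf_lt ab.
Qed.

Lemma standard_not_sq_self F : standard F -> ~ sq F F.
Proof.
case=> _ [a [b [ab E]]] _ _; rewrite /sq E => /(_ a (closure_itvoo_left ab)).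
by rewrite /= ltxx.
Qed.

Lemma sq_trans F G H : sq F G -> sq G H -> sq F H.
Proof. by move=> FG GH x /FG /subset_closure /GH. Qed.

Lemma ll_sq_absurd F G : standard G -> ll F G -> sq G F -> False.
Proof.
move=> /standard_ext_supt_neq0 [x xG] FG GF.
by have := FG x x (GF x (subset_closure xG)) xG; rewrite ltxx.
Qed.

Lemma standard_lt_irr F : standard F -> ~ lt F F.
Proof.
move=> sF [FF|]; last exact: standard_not_sq_self.
have [x xF] := standard_ext_supt_neq0 sF.
by have := FF x x xF xF; rewrite ltxx.
Qed.

Lemma standard_lt_asym F G : standard F -> standard G -> lt F G -> lt G F -> False.
Proof.
move=> sF sG [FG|FG] [GF|GF].
- have [x xF] := standard_ext_supt_neq0 sF.
  have [y yG] := standard_ext_supt_neq0 sG.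
  by have := lt_trans (FG x y xF yG) (GF y x yG xF); rewrite ltxx.
- exact: ll_sq_absurd sG FG GF.
- exact: ll_sq_absurd sF GF FG.
- exact: standard_not_sq_self sF (sq_trans FG GF).
Qed.

Lemma lt_nth_ltn (A : seq (@mfun R)) i j :
  (forall i, (i < size A)%N -> standard (nth mfun0 A i)) ->
  (forall i j, (i < j)%N -> (j < size A)%N -> lt (nth mfun0 A i) (nth mfun0 A j)) ->
  (i < size A)%N -> (j < size A)%N ->
  lt (nth mfun0 A i) (nth mfun0 A j) -> (i < j)%N.
Proof.
move=> Astd Aincr iA jA ltij; case: ltngtP => // [ji|eij].
- by case: (standard_lt_asym (Astd i iA) (Astd j jA) ltij); apply: Aincr.
- by move: ltij; rewrite eij => /(standard_lt_irr (Astd j jA)).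
Qed.

End StandardOrder.

Section Oscillation.
Context {R : realType}.
Implicit Types (F G : @mfun R).

Lemma itvoo_meet (u s u' s' : R) : u <= u' -> u' < s -> u' < s' ->
  exists x, u < x < s /\ u' < x < s'.
Proof.
move=> uu' u's u's'; have u'm : u' < Num.min s s' by rewrite lt_min u's u's'.
have [u'x xm] := midf_lt u'm; exists ((u' + Num.min s s') / 2).
move: xm; rewrite lt_min => /andP[xs xs'].
by rewrite (le_lt_trans uu' u'x) xs u'x xs'.
Qed.

Lemma marked_bumps_gt0 F : marked F -> supt (mf F) !=set0 ->
  (0 < size (mbumps F))%N.
Proof. by case=> _ _ _ cover [t /cover[k]]; case: (mbumps F). Qed.

Lemma standard_bumps_gt0 F : standard F -> (0 < size (mbumps F))%N.
Proof.
move=> sF; have [x xF] := standard_ext_supt_neq0 sF.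
case: sF => mF _ _ _; apply: marked_bumps_gt0 mF _.
apply/set0P/negP => /eqP supt0.
by move: xF; rewrite /ext_supt supt0 closure0 interior0.
Qed.

Lemma orbital_sub_ext_supt F k : marked F -> (k < size (mbumps F))%N ->
  [set t | bu (bmp F k) < t < bv (bmp F k)] `<=` ext_supt (mf F).
Proof.
case=> _ orb _ _ kF t /nbhs_itvoo; apply: filterS => y uyv.
by apply: subset_closure; have [[_ _ _ /(_ y uyv)]] := orb k kF.
Qed.

Lemma osc_gt0 F G k l : (k < size (mbumps F))%N -> (l < size (mbumps G))%N ->
  bu (bmp G l) < bu (bmp F k) < bv (bmp G l) -> (0 < osc F G)%N.
Proof.
move=> kF lG ukl; rewrite /osc -has_count; apply/(has_nthP bump0); exists l => //.
by apply/(has_nthP bump0); exists k => //; rewrite ukl.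
Qed.

Lemma sq_osc_gt0 F G : standard F -> marked G -> fast [:: F; G] -> sq F G ->
  (0 < osc F G)%N.
Proof.
move=> sF mG fFG FG; have kF := standard_bumps_gt0 sF.
have [mF _ _ _] := sF; have [_ orbF _ _] := mF; have [_ orbG _ coverG] := mG.
have [_ /andP[us sv]] := orbF 0%N kF.
set u := bu _ in us *; set s := bs _ in us sv.
have [ux xs] := midf_lt us; set x := (u + s) / 2 in ux xs.
have xF : ext_supt (mf F) x.
  by apply: (orbital_sub_ext_supt mF kF); rewrite /= (lt_trans xs sv) andbT.
have uxs : u < x < s by rewrite ux xs.
have [t [Gt /andP[ut ts]]] :=
  interior_subset (FG x (subset_closure xF)) _ (nbhs_itvoo uxs).
have [l lG /andP[ult tvl]] := coverG t Gt; apply: (osc_gt0 kF lG).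
rewrite (lt_trans ut tvl) andbT ltNge; apply/negP => ul.
(* Otherwise the left feet of bump 0 of F and bump l of G would overlap. *)
have [_ /andP[uls _]] := orbG l lG.
have [y [uys yls]] := itvoo_meet ul (lt_trans ult ts) uls.
have [_ feet0] := fFG 0%N 1%N 0%N l isT isT kF lG ltac:(by case).
suff : (feet F (bmp F 0) `&` feet G (bmp G l)) y by rewrite feet0.
by split; left.
Qed.

End Oscillation.

Section Subfamilies.
Context {R : realType}.
Implicit Types (A : seq (@mfun R)).

Lemma fast_map_nth A (s : seq nat) : fast A -> uniq s -> all (gtn (size A)) s ->
  fast [seq nth mfun0 A i | i <- s].
Proof.
move=> fA us /allP sA i j k l; rewrite size_map => si sj.
rewrite !(nth_map 0%N) // => ki lj ikjl.
have snth n : (n < size s)%N -> (nth 0%N s n < size A)%N.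
  by move=> ns; apply/sA/mem_nth.
have inj_s : nth 0%N s i = nth 0%N s j -> i = j.
  by move/eqP; rewrite nth_uniq // => /eqP.
have ne : (nth 0%N s i, k) <> (nth 0%N s j, l).
  by case=> eij ekl; apply: ikjl; rewrite (inj_s eij) ekl.
have [bumps_ne feet0] := fA _ _ k l (snth i si) (snth j sj) ki lj ne.
by split=> // ij; apply: bumps_ne => /inj_s.
Qed.

Lemma fast_pair A i j : fast A -> (i < size A)%N -> (j < size A)%N -> i <> j ->
  fast [:: nth mfun0 A i; nth mfun0 A j].
Proof.
move=> fA iA jA ij; apply: (fast_map_nth (s := [:: i; j])) => //=.
  by rewrite inE andbT; apply/eqP.
by rewrite iA jA.
Qed.

End Subfamilies.

Section Rotation.
Context {R : realType}.
Variables (c : R -> R -> (R -> R) * R) (A : seq (@mfun R)).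
Let m := (size A).-1.
Let amax := nth mfun0 A m.
Let oscillating := has (fun i => (0 < osc (nth mfun0 A i) amax)%N) (iota 0 m).

Lemma size_take_pred : size (take m A) = m.
Proof. exact/size_takel/leq_pred. Qed.

Lemma size_rotation_ge : (m <= size (rotation c A))%N.
Proof.
rewrite /rotation -/m -/amax -/oscillating.
by case: ifP; rewrite ?size_rcons size_take_pred.
Qed.

Lemma nth_rotation i : (i < m)%N -> nth mfun0 (rotation c A) i = nth mfun0 A i.
Proof.
move=> im; rewrite /rotation -/m -/amax -/oscillating.
by case: ifP => _; rewrite ?nth_rcons ?size_take_pred ?im nth_take.
Qed.

Lemma size_rotation_oscillating : oscillating -> size (rotation c A) = m.+1.
Proof.
move=> osc_pos; rewrite /rotation -/m -/amax -/oscillating osc_pos.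
by rewrite size_rcons size_take_pred.
Qed.

Lemma nth_rotation_oscillating : oscillating -> nth mfun0 (rotation c A) m = circ c amax.
Proof.
move=> osc_pos; rewrite /rotation -/m -/amax -/oscillating osc_pos.
by rewrite nth_rcons size_take_pred ltnn eqxx.
Qed.

End Rotation.

Theorem lemma4p6 (R : realType) (c : R -> R -> (R -> R) * R) (A : seq (@mfun R)) :
  choice_ok c ->
  (0 < size A)%N ->
  (forall i, (i < size A)%N -> standard (nth mfun0 A i)) ->
  fast A ->
  (forall i j, (i < j)%N -> (j < size A)%N -> lt (nth mfun0 A i) (nth mfun0 A j)) ->
  inS c (rotation c A) ->
  (forall i, (i < (size A).-1)%N ->
     sq (nth mfun0 A i) (nth mfun0 A (size A).-1) ->
     lt (circ c (nth mfun0 A (size A).-1)) (nth mfun0 A i)) ->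
  inS c A.
Proof.
move=> _ A0 Astd fA Aincr [_ _ rot_pair] circ_lt; set m := (size A).-1 in circ_lt.
split=> // [i j iA jA|i j iA jA ltij].
  by case: (ltngtP i j) => // [ij|ji] _; [left|right]; apply: Aincr.
have ij := lt_nth_ltn Astd Aincr iA jA ltij.
have im : (i < m)%N by rewrite -ltnS prednK // (leq_ltn_trans ij jA).
have [jm|mj] := ltnP j m.
  have rotA n : (n < m)%N -> (n < size (rotation c A))%N.
    by move=> nm; apply: leq_trans nm (size_rotation_ge c A).
  rewrite -(nth_rotation c im) -(nth_rotation c jm) in ltij *.
  exact: rot_pair (rotA i im) (rotA j jm) ltij.
have jm : j = m by apply/eqP; rewrite eqn_leq mj andbT -ltnS prednK.
rewrite jm in ltij *.
have im_neq : i <> m by move=> eim; rewrite eim ltnn in im.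
have mA : (m < size A)%N by rewrite ltn_predL.
have fast_im := fast_pair fA iA mA im_neq.
case: ltij => [ll_im|sq_im]; first exact: SP_ll.
apply: SP_sq => //.
have osc_im : has (fun k => (0 < osc (nth mfun0 A k) (nth mfun0 A m))%N) (iota 0 m).
  apply/hasP; exists i; first by rewrite mem_iota.
  have [marked_m _ _ _] := Astd m mA.
  exact: sq_osc_gt0 (Astd i iA) marked_m fast_im sq_im.
have mrot : (m < size (rotation c A))%N by rewrite size_rotation_oscillating.
rewrite -(nth_rotation_oscillating c osc_im) -(nth_rotation c im).
apply: rot_pair mrot (leq_trans im (size_rotation_ge c A)) _.
by rewrite nth_rotation_oscillating // nth_rotation //; apply: circ_lt.
Qed.
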